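(* Let $(\mathcal{N},\mathcal{I})$ be a downward-closed constraint family with a downward-closed polyhedral relaxation $\mathcal{P}\subseteq[0,1]^{\mathcal{N}}$, let $\mathcal{U}_i$ ($i\in\mathcal{N}$) be pairwise disjoint finite non-empty sets with $\mathcal{U}=\bigcup_i\mathcal{U}_i$, and let $\pi$ be a $(b,c)$-selectable greedy OCRS for $\mathcal{P}$ with characteristic CRS $\bar\pi$. For $\bm{z}\in b\cdot\mathcal{P}'$ let $\bm{x}\in[0,1]^{\mathcal{N}}$ be given by $x_i=1-\prod_{e\in\mathcal{U}_i}(1-z_e)$ and define, for $S\subseteq\mathcal{U}$, \[\pi'(S)=\bigcup_{i\in\bar\pi_{\bm{x}}(S_\downarrow),\ |S\cap\mathcal{U}_i|=1}(S\cap\mathcal{U}_i),\qquad S_\downarrow=\{i\in\mathcal{N}:S\cap\mathcal{U}_i\ne\emptyset\}.\] Then $\pi'$ is a $(b,c\cdot\gamma)$-balanced monotone contention resolution scheme for $\mathcal{P}'$ (with respect to the partition extension of $(\mathcal{N},\mathcal{I})$), where $\gamma=\min_{i\in\mathcal{N}}\prod_{e\in\mathcal{U}_i}(1-z_e)$. That is: $\pi'(S)\subseteq S$ and $\pi'(S)$ is feasible in the partition extension for every $S$; $\Pr[e\in\pi'(S_1)]\ge\Pr[e\in\pi'(S_2)]$ whenever $e\in S_1\subseteq S_2\subseteq\mathcal{U}$; and $\Pr_{S\sim R(\bm{z})}[e\in\pi'(S)\mid e\in S]\ge c\gamma$ for every $e\in\mathcal{U}$.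
   Context: $R(\bm{x})$ denotes a random set containing each coordinate independently with probability equal to its entry. $\mathcal{P}'=\{\bm{y}\in[0,1]^{\mathcal{U}}:\exists\bm{x}\in\mathcal{P},\ \sum_{e\in\mathcal{U}_i}y_e=x_i\ \forall i\}$; $b\cdot\mathcal{Q}=\{b\bm{q}:\bm{q}\in\mathcal{Q}\}$. The partition extension of $(\mathcal{N},\mathcal{I})$ is the family $\{S\subseteq\mathcal{U}: S_\downarrow\in\mathcal{I},\ |S\cap\mathcal{U}_i|\le1\ \forall i\}$. A greedy OCRS $\pi$ for $\mathcal{P}$: for each $\bm{x}\in\mathcal{P}$ it fixes a (possibly random) downward-closed subfamily $\mathcal{F}_{\pi,\bm{x}}\subseteq\mathcal{I}$, and selects an arriving active element iff the selected set plus it lies in $\mathcal{F}_{\pi,\bm{x}}$. It is $(b,c)$-selectable if for all $\bm{x}\in b\cdot\mathcal{P}$ and $e\in\mathcal{N}$: $\Pr[I\cup\{e\}\in\mathcal{F}_{\pi,\bm{x}}\ \forall I\subseteq R(\bm{x}),I\in\mathcal{F}_{\pi,\bm{x}}]\ge c$. Its characteristic CRS is $\bar\pi_{\bm{x}}(A)=\{e\in A: I\cup\{e\}\in\mathcal{F}_{\pi,\bm{x}}\ \forall I\subseteq A\text{ with }I\in\mathcal{F}_{\pi,\bm{x}}\}$ (random if $\mathcal{F}_{\pi,\bm{x}}$ is). A CRS for a relaxation $\mathcal{Q}$ of a family $\mathcal{J}$ maps each $A$ (and point $\bm{y}$) to a random subset of $A$ that lies in $\mathcal{J}$; it is $(b,c)$-balanced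 if for all $\bm{y}\in b\cdot\mathcal{Q}$ and $e$ in the support of $\bm{y}$, $\Pr[e\in\pi_{\bm{y}}(R(\bm{y}))\mid e\in R(\bm{y})]\ge c$, and monotone if $\Pr[e\in\pi(A_1)]\ge\Pr[e\in\pi(A_2)]$ whenever $e\in A_1\subseteq A_2$. *)

From mathcomp Require Import all_boot all_order all_algebra.
Set Implicit Arguments. Unset Strict Implicit. Unset Printing Implicit Defensive.
Import Order.TTheory GRing.Theory Num.Theory.
Local Open Scope ring_scope.

Section Defs.
Variable R : realFieldType.

Definition down_closed_fam (N : finType) (F : {set {set N}}) : Prop :=
  forall A B : {set N}, B \subset A -> A \in F -> B \in F.

Definition polyhedral (N : finType) (P : (N -> R) -> Prop) : Prop :=
  exists (m : nat) (A : 'I_m -> N -> R) (d : 'I_m -> R),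
    forall x : N -> R, P x <-> (forall k, \sum_(i : N) A k i * x i <= d k).

Definition dc_poly_relaxation (N : finType) (I : {set {set N}})
    (P : (N -> R) -> Prop) : Prop :=
  [/\ (forall x, P x -> forall i, 0 <= x i <= 1),
      (forall x y, P x -> (forall i, 0 <= y i <= x i) -> P y),
      polyhedral P &
      (forall S, S \in I -> P (fun i => (i \in S)%:R))].

Definition scaleset (T : Type) (b : R) (Q : (T -> R) -> Prop) (y : T -> R) :=
  exists q, Q q /\ forall t, y t = b * q t.

(* Pr[R(x) = A] : each coordinate independently with probability x_i *)
Definition prodR (T : finType) (x : T -> R) (A : {set T}) : R :=
  \prod_(i in A) x i * \prod_(i in ~: A) (1 - x i).

(* the block U_i of the partition of U given by part : U -> N *)
Definition blk (N U : finType) (part : U -> N) (i : N) : {set U} :=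
  [set e | part e == i].

Definition Pprime (N U : finType) (part : U -> N) (P : (N -> R) -> Prop)
    (y : U -> R) : Prop :=
  (forall e, 0 <= y e <= 1) /\
  exists x, P x /\ forall i, \sum_(e in blk part i) y e = x i.

(* A greedy OCRS for P is given, for every x in P, by a probability
   distribution mu x over downward-closed (nonempty) subfamilies of I. *)
Definition greedy_ocrs (N : finType) (I : {set {set N}}) (P : (N -> R) -> Prop)
    (mu : (N -> R) -> {set {set N}} -> R) : Prop :=
  forall x, P x ->
    [/\ (forall F, 0 <= mu x F),
        \sum_(F : {set {set N}}) mu x F = 1 &
        (forall F, mu x F != 0 ->
           [/\ F \subset I, down_closed_fam F & set0 \in F])].

Definition sel_event (N : finType) (F : {set {set N}}) (A : {set N}) (e : N)
  : bool :=
  [forall J in powerset A, (J \in F) ==> (e |: J \in F)].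

Definition selectable (N : finType) (P : (N -> R) -> Prop)
    (mu : (N -> R) -> {set {set N}} -> R) (b c : R) : Prop :=
  forall x, scaleset b P x -> forall e : N,
    c <= \sum_(F : {set {set N}}) \sum_(A : {set N})
            mu x F * prodR x A * (sel_event F A e)%:R.

(* characteristic CRS (for a realization F of the random family) *)
Definition char_crs (N : finType) (F : {set {set N}}) (A : {set N}) : {set N} :=
  [set e in A | sel_event F A e].

Definition pi' (N U : finType) (part : U -> N) (F : {set {set N}}) (S : {set U})
  : {set U} :=
  [set e in S | (part e \in char_crs F (part @: S))
                && (#|S :&: blk part (part e)| == 1)%N].

Definition part_ext (N U : finType) (I : {set {set N}}) (part : U -> N)
    (S : {set U}) : bool :=
  (part @: S \in I) && [forall i, (#|S :&: blk part i| <= 1)%N].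

Definition Pr_pi' (N U : finType) (part : U -> N) (m : {set {set N}} -> R)
    (S : {set U}) (e : U) : R :=
  \sum_(F : {set {set N}}) m F * (e \in pi' part F S)%:R.

End Defs.

(* Fix a realization F of the greedy OCRS.  An element e lands in pi'(S) iff e is
   sampled, no other element of its block U_(part e) is sampled, and the
   characteristic CRS of F accepts part e on the image of the sample outside that
   block.  These events are independent.  The first two have probabilities z_e and
   prod_(u in U_(part e), u <> e) (1 - z_u) >= gamma.  For the third, the image
   under part of a product distribution on U is the product distribution whose
   i-th coordinate is the probability of hitting U_i, and the acceptance test for
   part e does not look at coordinate part e; so it has the probability
   Pr_(A ~ R(x))[part e passes the test for F], which averages over F to at least c
   because x lies in b.P.  Feasibility and monotonicity hold for every single F. *)

From mathcomp Require Import all_boot all_order all_algebra.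
From mathcomp Require Import ring lra.
From Stdlib Require Import FunctionalExtensionality.
Set Implicit Arguments. Unset Strict Implicit. Unset Printing Implicit Defensive.
Import Order.TTheory GRing.Theory Num.Theory.
Local Open Scope ring_scope.

Lemma set_ind (T : finType) (Q : {set T} -> Prop) :
  Q set0 -> (forall (u : T) (D : {set T}), u \notin D -> Q D -> Q (u |: D)) ->
  forall D, Q D.
Proof.
move=> Q0 QU D; move: {2}#|D| (erefl #|D|) => n; elim: n D => [|n IH] D cardD.
  by move/eqP: cardD; rewrite cards_eq0 => /eqP ->.
have [u uD] : exists u, u \in D by apply/card_gt0P; rewrite cardD.
rewrite -(setD1K uD); apply: QU; first by rewrite setD11.
by apply: IH; move: cardD; rewrite (cardsD1 u) uD => -[].
Qed.

Section ProductDistribution.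
Variables (R : realFieldType) (T : finType).
Implicit Types (y : T -> R) (j u : T) (A S D : {set T}) (h : {set T} -> R).

Definition expect y h : R := \sum_(A : {set T}) prodR y A * h A.

Definition fun_upd y (u : T) (p : R) : T -> R := fun t => if t == u then p else y t.

Definition zero_on D y : T -> R := fun t => if t \in D then 0 else y t.

Definition prodR_off y (j : T) A : R :=
  \prod_(i | i != j) (if i \in A then y i else 1 - y i).

Lemma prodRE y A : prodR y A = \prod_i (if i \in A then y i else 1 - y i).
Proof.
rewrite /prodR [RHS](bigID (mem A)) /=; congr (_ * _).
  by apply: eq_bigr => i ->.
by apply: eq_big => [i|i]; rewrite ?inE // => /negbTE ->.
Qed.

Lemma expect_ge0 y h : (forall t, 0 <= y t <= 1) -> (forall A, 0 <= h A) ->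
  0 <= expect y h.
Proof.
move=> y01 h_ge0; apply: sumr_ge0 => A _; apply: mulr_ge0 => //.
by rewrite prodRE; apply: prodr_ge0 => i _; case: ifP; have := y01 i; lra.
Qed.

Lemma eq_expect y h h' : h =1 h' -> expect y h = expect y h'.
Proof. by move=> hh'; apply: eq_bigr => A _; rewrite hh'. Qed.

Lemma expect1 y : expect y (fun _ => 1) = 1.
Proof.
rewrite /expect; under eq_bigr do rewrite mulr1 prodRE.
rewrite -(bigA_distr _ _ y (fun i => 1 - y i)).
by rewrite big1 // => i _ /=; rewrite subrKC.
Qed.

Lemma expect0 y h : (forall t, y t = 0) -> expect y h = h set0.
Proof.
move=> y0; rewrite /expect (bigD1 set0) //= big1 ?addr0.
  by rewrite prodRE big1 ?mul1r // => i _; rewrite inE y0 subr0.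
move=> A /set0Pn[t tA]; rewrite prodRE (bigD1 t) //= tA y0.
by rewrite !mul0r.
Qed.

Lemma prodR_pivot y j A :
  prodR y A = (if j \in A then y j else 1 - y j) * prodR_off y j A.
Proof. by rewrite prodRE (bigD1 j). Qed.

Lemma prodR_off_setU1 y j A : prodR_off y j (j |: A) = prodR_off y j A.
Proof. by apply: eq_bigr => i /negbTE ij; rewrite in_setU1 ij. Qed.

Lemma eq_prodR_off y y' j A :
  (forall t, t != j -> y t = y' t) -> prodR_off y j A = prodR_off y' j A.
Proof. by move=> yy'; apply: eq_bigr => i /yy' ->. Qed.

Lemma expect_pivot y j h :
  expect y h = \sum_(A : {set T} | j \notin A)
    prodR_off y j A * ((1 - y j) * h A + y j * h (j |: A)).
Proof.
rewrite /expect (bigID (fun A : {set T} => j \in A)) /=.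
rewrite (reindex_onto (fun A : {set T} => j |: A) (fun A => A :\ j)) /=; last first.
  by move=> A jA; rewrite setD1K.
rewrite (eq_bigl (fun A : {set T} => j \notin A)); last first.
  move=> A; rewrite setU11 /=; apply/eqP/idP => [<-|jA]; first by rewrite setD11.
  by rewrite setU1K.
rewrite addrC -big_split /=; apply: eq_bigr => A jA.
rewrite (prodR_pivot y j A) (prodR_pivot y j (j |: A)) prodR_off_setU1 setU11.
by rewrite (negbTE jA); ring.
Qed.

(* Adding j to R(y) independently with probability p yields R(y'). *)
Lemma expect_mix y y' j p h :
  (forall t, t != j -> y t = y' t) -> y' j = 1 - (1 - p) * (1 - y j) ->
  expect y (fun A => (1 - p) * h A + p * h (j |: A)) = expect y' h.
Proof.
move=> yy' y'j; rewrite !(expect_pivot _ j); apply: eq_bigr => A _.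
by rewrite (eq_prodR_off _ yy') y'j setUA setUid; ring.
Qed.

Lemma expect_setU1_inv y y' j h :
  (forall t, t != j -> y t = y' t) -> (forall A, h (j |: A) = h A) ->
  expect y h = expect y' h.
Proof.
move=> yy' hj; rewrite !(expect_pivot _ j); apply: eq_bigr => A _.
by rewrite (eq_prodR_off _ yy') !hj; ring.
Qed.

Lemma expect_mem y u h :
  expect y (fun S => (u \in S)%:R * h (S :\ u)) = y u * expect (fun_upd y u 0) h.
Proof.
rewrite !(expect_pivot _ u) mulr_sumr; apply: eq_bigr => A uA.
have updE t : t != u -> y t = fun_upd y u 0 t by rewrite /fun_upd => /negbTE ->.
by rewrite (eq_prodR_off _ updE) /fun_upd eqxx (negbTE uA) setU11 setU1K //=; ring.
Qed.

Lemma expect_indicator y u : expect y (fun S => (u \in S)%:R) = y u.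
Proof.
transitivity (expect y (fun S => (u \in S)%:R * 1)).
  by apply: eq_expect => S; rewrite mulr1.
by rewrite (expect_mem y u (fun _ => 1)) expect1 mulr1.
Qed.

Lemma prodR_zero_on y D S :
  (S :&: D == set0)%:R * prodR y S = \prod_(u in D) (1 - y u) * prodR (zero_on D y) S.
Proof.
rewrite !prodRE; have [SD0|[t]] := set_0Vmem (S :&: D); last first.
  rewrite inE => /andP[tS tD]; have /negbTE -> : S :&: D != set0.
    by apply/set0Pn; exists t; rewrite inE tS.
  by rewrite mul0r [X in _ * X](bigD1 t) //= tS /zero_on tD mul0r mulr0.
have DnS i : i \in D -> (i \in S) = false.
  by move=> iD; apply/negP => iS; move/setP: SD0 => /(_ i); rewrite !inE iS iD.
rewrite SD0 eqxx mul1r (bigID (mem D)) [X in _ * X](bigID (mem D)) /= mulrA.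
congr (_ * _).
  rewrite [X in _ * X]big1 ?mulr1; first by apply: eq_bigr => i /DnS ->.
  by move=> i iD; rewrite DnS // /zero_on iD subr0.
by apply: eq_bigr => i /negbTE iD; rewrite /zero_on iD.
Qed.

Lemma expect_disjoint y D h :
  expect y (fun S => (S :&: D == set0)%:R * h S) =
  \prod_(u in D) (1 - y u) * expect (zero_on D y) h.
Proof.
rewrite /expect mulr_sumr; apply: eq_bigr => S _.
by rewrite mulrCA mulrA prodR_zero_on -mulrA.
Qed.

Lemma fun_upd_ind (Q : (T -> R) -> Prop) :
  Q (fun _ => 0) -> (forall y u p, y u = 0 -> Q y -> Q (fun_upd y u p)) ->
  forall y, Q y.
Proof.
move=> Q0 Qupd y.
have QyD D : Q (fun t => if t \in D then y t else 0).
  elim/set_ind: D => [|u D uD QD].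
    rewrite (_ : (fun t => _) = fun _ => 0) //.
    by apply: functional_extensionality => t; rewrite inE.
  have := Qupd _ u (y u) _ QD; rewrite (negbTE uD) => /(_ erefl).
  congr Q; apply: functional_extensionality => t; rewrite /fun_upd in_setU1.
  by case: eqP => [->|].
rewrite (_ : y = fun t => if t \in setT then y t else 0) //.
by apply: functional_extensionality => t; rewrite inE.
Qed.

End ProductDistribution.

Section Pushforward.
Variables (R : realFieldType) (N U : finType) (part : U -> N).
Implicit Types (y : U -> R) (h : {set N} -> R).

(* The coordinate x_i of the paper: the probability that R(y) meets block i. *)
Definition hit_prob y (i : N) : R := 1 - \prod_(e in blk part i) (1 - y e).

Lemma hit_prob_upd y u p j : y u = 0 ->
  hit_prob (fun_upd y u p) j =
  if j == part u then 1 - (1 - p) * (1 - hit_prob y (part u)) else hit_prob y j.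
Proof.
move=> yu; rewrite /hit_prob; case: eqP => [->|/eqP ju].
  have u_blk : u \in blk part (part u) by rewrite inE.
  rewrite (bigD1 u) //= [in RHS](bigD1 u) //= /fun_upd eqxx yu subr0 mul1r.
  rewrite (eq_bigr (fun e => 1 - y e)); first by ring.
  by move=> e /andP[_ /negbTE ->].
congr (1 - _); apply: eq_bigr => e; rewrite inE => /eqP ej; rewrite /fun_upd.
by case: eqP => // eu; rewrite -ej eu eqxx in ju.
Qed.

Lemma hit_prob_zero_on_blk y i j :
  i != j -> hit_prob (zero_on (blk part j) y) i = hit_prob y i.
Proof.
move=> /negbTE ij; congr (1 - _); apply: eq_bigr => e; rewrite inE => /eqP ei.
by rewrite /zero_on inE ei ij.
Qed.

Lemma expect_imset y h :
  expect y (fun S => h (part @: S)) = expect (hit_prob y) h.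
Proof.
elim/fun_upd_ind: y h => [|y u p yu IH] h.
  rewrite !expect0 ?imset0 // => i.
  by rewrite /hit_prob big1 ?subrr // => e _; rewrite subr0.
transitivity (expect y (fun S =>
    (fun A => (1 - p) * h A + p * h (part u |: A)) (part @: S))).
  symmetry; rewrite -[RHS](@expect_mix _ _ y _ u p) => [|t /negbTE tu|].
  - by apply: eq_expect => S; rewrite imsetU1.
  - by rewrite /fun_upd tu.
  - by rewrite /fun_upd eqxx yu; ring.
rewrite (IH (fun A => (1 - p) * h A + p * h (part u |: A))).
apply: expect_mix => [i /negbTE iu|].
  by rewrite hit_prob_upd // iu.
by rewrite hit_prob_upd // eqxx.
Qed.

End Pushforward.

Section SelectionEvent.
Variables (N : finType) (F : {set {set N}}).
Implicit Types (A J : {set N}) (i : N).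

Lemma sel_event_setU1 A i : sel_event F (i |: A) i = sel_event F A i.
Proof.
apply/forall_inP/forall_inP => sel J; rewrite !powersetE => JA.
  by apply: sel; rewrite powersetE (subset_trans JA) ?subsetUr.
have [iJ|iNJ] := boolP (i \in J).
  by rewrite (setUidPr _) ?sub1set //; apply/implyP.
apply: sel; rewrite powersetE; apply/subsetP => t tJ.
by have := subsetP JA t tJ; rewrite in_setU1 => /predU1P[ti|//]; rewrite -ti tJ in iNJ.
Qed.

Lemma sel_event_subset A1 A2 i :
  A1 \subset A2 -> sel_event F A2 i -> sel_event F A1 i.
Proof.
move=> A12 /forall_inP sel; apply/forall_inP => J; rewrite !powersetE => JA1.
by apply: sel; rewrite powersetE (subset_trans JA1).
Qed.

Lemma char_crs_subset A : char_crs F A \subset A.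
Proof. by apply/subsetP => i; rewrite inE => /andP[]. Qed.

Lemma char_crs_subset_mem A J : set0 \in F -> J \subset char_crs F A -> J \in F.
Proof.
move=> F0; elim/set_ind: J => [//|u J _ IH].
rewrite subUset sub1set inE => /andP[/andP[_ /forall_inP sel] Jc].
apply: (implyP (sel J _)) (IH Jc).
by rewrite powersetE (subset_trans Jc) ?char_crs_subset.
Qed.

End SelectionEvent.

Section ContentionResolution.
Variables (R : realFieldType) (N U : finType) (part : U -> N) (F : {set {set N}}).
Implicit Types (S : {set U}) (e : U).

Lemma mem_pi' S e :
  (e \in pi' part F S) =
  [&& e \in S, (S :\ e) :&: blk part (part e) == set0
             & sel_event F (part @: (S :\ e)) (part e)].
Proof.
rewrite /pi' inE; have [eS|//] := boolP (e \in S).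
rewrite /char_crs inE imset_f //= -{1 2}(setD1K eS) imsetU1 sel_event_setU1 andbC.
congr (_ && _).
rewrite (cardsD1 e) setD1K // inE eS inE eqxx /= add1n eqSS cards_eq0.
apply/eqP/eqP => SB0; apply/setP => t; move/setP: SB0 => /(_ t); rewrite !inE;
  by case: (t =P e) => [->|] /=; rewrite ?eqxx ?andbF.
Qed.

Lemma pi'_subset S : pi' part F S \subset S.
Proof. by apply/subsetP => e; rewrite inE => /andP[]. Qed.

Lemma pi'_part_ext (I : {set {set N}}) S :
  set0 \in F -> F \subset I -> part_ext I part (pi' part F S).
Proof.
move=> F0 FI; apply/andP; split.
  apply: (subsetP FI); apply: (@char_crs_subset_mem _ F (part @: S) _ F0).
  by apply/subsetP => _ /imsetP[e + ->]; rewrite inE => /and3P[].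
apply/forallP => i; have [->|[e]] := set_0Vmem (pi' part F S :&: blk part i).
  by rewrite cards0.
rewrite !inE => /andP[/and3P[_ _ /eqP <-] /eqP <-].
by apply/subset_leq_card/setSI/pi'_subset.
Qed.

Lemma mem_pi'_subset S1 S2 e : e \in S1 -> S1 \subset S2 ->
  e \in pi' part F S2 -> e \in pi' part F S1.
Proof.
rewrite !mem_pi' => -> S12 /and3P[_ B2 sel2] /=; have S12e := setSD [set e] S12.
rewrite -subset0 in B2; apply/andP; split.
  by rewrite -subset0; apply: subset_trans B2; apply: setSI.
by apply: sel_event_subset sel2; apply: imsetS.
Qed.

Lemma expect_mem_pi' (z : U -> R) e :
  expect z (fun S => (e \in pi' part F S)%:R) =
  z e * \prod_(u in blk part (part e) | u != e) (1 - z u) *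
  expect (hit_prob part z) (fun A => (sel_event F A (part e))%:R).
Proof.
set B := blk part (part e); have eB : e \in B by rewrite inE.
pose sel_im (T : {set U}) := (sel_event F (part @: T) (part e))%:R : R.
pose G (T : {set U}) := (T :&: B == set0)%:R * sel_im T.
transitivity (expect z (fun S => (e \in S)%:R * G (S :\ e))).
  by apply: eq_expect => S; rewrite mem_pi' -!mulnb !natrM.
rewrite (expect_mem z e G) (expect_disjoint _ _ sel_im).
have -> : zero_on B (fun_upd z e 0) = zero_on B z.
  apply: functional_extensionality => t; rewrite /zero_on /fun_upd.
  by case: eqP => [->|//]; rewrite eB.
rewrite (expect_imset part _ (fun A => (sel_event F A (part e))%:R)).
rewrite (@expect_setU1_inv _ _ _ (hit_prob part z) (part e)); last 2 first.
- by move=> i /hit_prob_zero_on_blk.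
- by move=> A; rewrite sel_event_setU1.
rewrite (bigD1 e) //= /fun_upd eqxx subr0 mul1r mulrA; congr (_ * _ * _).
by apply: eq_bigr => u /andP[_ /negbTE ->].
Qed.

End ContentionResolution.

Section ContentionResolutionProbability.
Variables (R : realFieldType) (N U : finType) (part : U -> N).
Implicit Types (S : {set U}) (e : U) (m : {set {set N}} -> R).

Lemma Pr_pi'_antimono m S1 S2 e :
  (forall F, 0 <= m F) -> e \in S1 -> S1 \subset S2 ->
  Pr_pi' part m S2 e <= Pr_pi' part m S1 e.
Proof.
move=> m_ge0 eS1 S12; apply: ler_sum => F _; apply: ler_wpM2l => //.
rewrite ler_nat.
have := @mem_pi'_subset _ _ part F _ _ _ eS1 S12.
by case: (e \in pi' part F S2) => // /(_ isT) ->.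
Qed.

Lemma expect_Pr_pi' m (z : U -> R) e :
  \sum_S prodR z S * (e \in S)%:R * Pr_pi' part m S e =
  z e * \prod_(u in blk part (part e) | u != e) (1 - z u) *
  \sum_F m F * expect (hit_prob part z) (fun A => (sel_event F A (part e))%:R).
Proof.
set Q := \prod_(u in _ | _) _; rewrite /Pr_pi'; under eq_bigr do rewrite mulr_sumr.
rewrite exchange_big mulr_sumr; apply: eq_bigr => F _.
rewrite mulrCA -expect_mem_pi' mulr_sumr; apply: eq_bigr => S _.
have [_|eNS] := boolP (e \in S); first by rewrite /= mulr1 mulrCA.
by rewrite (contraNF (subsetP (pi'_subset part F S) e) eNS) /= !(mulr0, mul0r).
Qed.

End ContentionResolutionProbability.

Lemma ler_1Bsum_prod1B (R : realDomainType) (I : finType) (A : {pred I}) (w : I -> R) :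
  (forall i, i \in A -> 0 <= w i <= 1) ->
  1 - \sum_(i in A) w i <= \prod_(i in A) (1 - w i).
Proof.
move=> w01; suff [] : 0 <= \prod_(i in A) (1 - w i) <= 1 /\
                     1 - \sum_(i in A) w i <= \prod_(i in A) (1 - w i) by [].
apply: (big_ind2 (fun s a => 0 <= a <= 1 /\ 1 - s <= a)).
- by rewrite subr0 ler01 lexx.
- move=> s1 a1 s2 a2 [/andP[a1_ge0 a1_le1] s1a1] [/andP[a2_ge0 a2_le1] s2a2].
  by split; [apply/andP; split|]; nra.
- by move=> i /w01/andP[wi_ge0 wi_le1]; split; [apply/andP; split|]; lra.
Qed.

Lemma selectable_expect (R : realFieldType) (N : finType) (P : (N -> R) -> Prop)
    (mu : (N -> R) -> {set {set N}} -> R) (b c : R) x i :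
  selectable P mu b c -> scaleset b P x ->
  c <= \sum_F mu x F * expect x (fun A => (sel_event F A i)%:R).
Proof.
move=> sel xbP; rewrite /expect; under eq_bigr do rewrite mulr_sumr.
by under eq_bigr do under eq_bigr do rewrite mulrA; apply: sel.
Qed.

Section Relaxation.
Variables (R : realFieldType) (N : finType) (P : (N -> R) -> Prop) (b : R).
Hypothesis P01 : forall x, P x -> forall i, 0 <= x i <= 1.
Hypothesis P_down : forall x y, P x -> (forall i, 0 <= y i <= x i) -> P y.
Hypothesis b01 : 0 <= b <= 1.

Lemma scaleset_mem x : scaleset b P x -> P x.
Proof.
case=> q [Pq xE]; apply: (P_down Pq) => i; rewrite xE.
have /andP[q0 q1] := P01 Pq i; case/andP: b01 => b0 b1; apply/andP; split; nra.
Qed.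

Lemma scaleset_Pprime01 (U : finType) (part : U -> N) z :
  scaleset b (Pprime part P) z -> forall e, 0 <= z e <= 1.
Proof.
case=> q [[q01 _] zE] e; rewrite zE; have /andP[q0 q1] := q01 e.
by case/andP: b01 => b0 b1; apply/andP; split; nra.
Qed.

Lemma scaleset_hit_prob (U : finType) (part : U -> N) z :
  scaleset b (Pprime part P) z -> scaleset b P (hit_prob part z).
Proof.
move=> zP; have z01 := scaleset_Pprime01 zP; case: zP => q [[_ [x [Px qx]]] zE].
have hit_le i : 0 <= hit_prob part z i <= b * x i.
  have -> : b * x i = \sum_(e in blk part i) z e.
    by rewrite -qx mulr_sumr; apply: eq_bigr => e _; rewrite zE.
  rewrite /hit_prob subr_ge0 prodr_ile1 /= => [|e _]; last by have := z01 e; lra.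
  by have := ler_1Bsum_prod1B (A := blk part i) (fun e _ => z01 e); lra.
have [b0|b_neq0] := eqVneq b 0.
  exists x; split => // i; rewrite b0 mul0r; apply/le_anti.
  by have := hit_le i; rewrite b0 mul0r andbC.
have b_gt0 : 0 < b by rewrite lt_def b_neq0; case/andP: b01.
exists (fun i => hit_prob part z i / b); split; last by move=> i; rewrite mulrC divfK.
apply: (P_down Px) => i; have /andP[hit_ge0 hit_lebx] := hit_le i.
apply/andP; split; first by rewrite divr_ge0 // ltW.
by rewrite ler_pdivrMr // mulrC.
Qed.

End Relaxation.

Lemma bigmin_blk_prod1B_bounds (R : realFieldType) (N U : finType) (part : U -> N)
    (z : U -> R) e :
  (forall t, 0 <= z t <= 1) ->
  0 <= \big[Num.min/1]_(i : N) \prod_(u in blk part i) (1 - z u)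
    <= \prod_(u in blk part (part e) | u != e) (1 - z u).
Proof.
move=> z01; have prod_ge0 (P : pred U) : 0 <= \prod_(u | P u) (1 - z u).
  by apply: prodr_ge0 => u _; have := z01 u; lra.
apply/andP; split; first by apply: le_bigmin => // i; rewrite ler01.
apply: le_trans (bigmin_le 1 (part e) (fun i => \prod_(u in blk part i) (1 - z u))) _.
rewrite (bigD1 e) ?inE //=; apply: ler_piMl => //; have := z01 e; lra.
Qed.

Theorem lemma4 (R : realFieldType) (N U : finType) (I : {set {set N}})
    (P : (N -> R) -> Prop) (part : U -> N)
    (mu : (N -> R) -> {set {set N}} -> R) (b c : R) :
  down_closed_fam I -> set0 \in I ->
  dc_poly_relaxation I P ->
  (forall i : N, exists e : U, part e = i) ->
  0 <= b <= 1 ->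
  greedy_ocrs I P mu ->
  selectable P mu b c ->
  forall z : U -> R, scaleset b (Pprime part P) z ->
  let x := fun i : N => 1 - \prod_(e in blk part i) (1 - z e) in
  let gamma := \big[Num.min/1]_(i : N) \prod_(e in blk part i) (1 - z e) in
  [/\ (* pi'(S) is a subset of S and feasible, for every realization *)
      (forall (S : {set U}) (F : {set {set N}}), mu x F != 0 ->
         pi' part F S \subset S /\ part_ext I part (pi' part F S)),
      (* monotone *)
      (forall (e : U) (S1 S2 : {set U}), e \in S1 -> S1 \subset S2 ->
         Pr_pi' part (mu x) S2 e <= Pr_pi' part (mu x) S1 e) &
      (* (b, c*gamma)-balanced *)
      (forall e : U, 0 < z e ->
         c * gamma <=
         (\sum_(S : {set U}) prodR z S * (e \in S)%:R * Pr_pi' part (mu x) S e)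
         / (\sum_(S : {set U}) prodR z S * (e \in S)%:R))].
Proof.
move=> _ _ [P01 P_down _ _] _ b01 ocrs selectable z zP x gamma.
have z01 := scaleset_Pprime01 b01 zP.
have xbP : scaleset b P x := scaleset_hit_prob P_down b01 zP.
have Px := scaleset_mem P01 P_down b01 xbP.
have [mu_ge0 _ muF] := ocrs x Px.
split.
- by move=> S F /muF[FI _ F0]; split; [apply: pi'_subset | apply: pi'_part_ext].
- by move=> e S1 S2; apply: Pr_pi'_antimono.
move=> e ze_gt0; have -> : \sum_S prodR z S * (e \in S)%:R = z e := expect_indicator z e.
rewrite expect_Pr_pi'; set Q := \prod_(u in _ | _) _; set Sig := \sum_F _.
have -> : z e * Q * Sig / z e = Q * Sig by field; rewrite gt_eqF.
have Sig_ge0 : 0 <= Sig.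
  apply: sumr_ge0 => F _; rewrite mulr_ge0 ?mu_ge0 //.
  by apply: expect_ge0 => [|A]; [exact: P01 Px | exact: ler0n].
have c_le_Sig : c <= Sig := selectable_expect (part e) selectable xbP.
have /andP[gamma_ge0 gamma_le] := bigmin_blk_prod1B_bounds part e z01.
apply: le_trans (ler_wpM2r gamma_ge0 c_le_Sig) _; rewrite mulrC.
by apply: ler_wpM2r.
Qed.
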